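(* Let $\mathcal{P}$ be a $\delta^+$-common vertex property with associated constant $d(\mathcal{P})$, let $k\geq 1$, $\ell\geq 2$, and let $G$ be a finite digraph with $\delta^+(G)\geq d(\mathcal{P})+2k\ell^k$. Then $G$ contains a subgraph $B$ isomorphic to $B^+_{k,\ell}$ such that every leaf of $B$ satisfies $\mathcal{P}$ in $G$.
   Context: Digraphs are finite, have no loops and no multiple copies of the same edge, but may contain two edges in opposite directions between a pair of vertices. $\delta^+(G)$ is the minimum out-degree. A vertex property $\mathcal{P}$ (a property of a pair (digraph, vertex of it)) is $\delta^+$-common if (i) there is an integer $d=d(\mathcal{P})$ such that every digraph $G$ with $\delta^+(G)\geq d$ contains a vertex satisfying $\mathcal{P}$ in $G$, and (ii) $\mathcal{P}$ is anti-monotone: whenever $H$ is a subgraph of $G$ and $v\in V(H)$ satisfies $\mathcal{P}$ in $H$, then $v$ satisfies $\mathcal{P}$ in $G$. $B^+_{k,\ell}$ is the complete $\ell$-ary tree of depth $k$ (distance from root to leaves $k$) with all edges oriented away from the root; its leaves are the $\ell^k$ vertices at depth $k$. *)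

From mathcomp Require Import all_boot.
Set Implicit Arguments. Unset Strict Implicit. Unset Printing Implicit Defensive.

(* Opposite edges (x,y),(y,x) are allowed; multiple edges are impossible. *)
Definition digraph (T : finType) (V : {set T}) (E : {set T * T}) : Prop :=
  [/\ V != set0,
      (forall x y, (x, y) \in E -> (x \in V) && (y \in V))
    & (forall x, (x, x) \notin E)].

Definition outdeg (T : finType) (E : {set T * T}) (x : T) : nat :=
  #|[set y | (x, y) \in E]|.

Definition min_outdeg_ge (T : finType) (V : {set T}) (E : {set T * T}) (d : nat) :=
  forall x, x \in V -> d <= outdeg E x.

Definition subgraph (T : finType) (V' : {set T}) (E' : {set T * T})
  (V : {set T}) (E : {set T * T}) : Prop :=
  V' \subset V /\ E' \subset E.

Definition vertex_property :=
  forall T : finType, {set T} -> {set T * T} -> T -> Prop.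

Definition delta_common (P : vertex_property) (d : nat) : Prop :=
  (forall (T : finType) (V : {set T}) (E : {set T * T}),
      digraph V E -> min_outdeg_ge V E d -> exists2 v, v \in V & P T V E v)
  /\
  (forall (T : finType) (V : {set T}) (E : {set T * T}) (V' : {set T}) (E' : {set T * T}) v,
      digraph V E -> digraph V' E' -> subgraph V' E' V E ->
      v \in V' -> P T V' E' v -> P T V E v).

(* B^+_{k,l}: vertices are the words over 'I_l of length <= k, the root is
   the empty word, and the edges are s -> rcons s i (oriented away from the
   root). Leaves are the words of length exactly k. *)
Definition outtree_vertex (k : nat) (l : nat) (s : seq 'I_l) : bool := size s <= k.
Definition outtree_leaf (k : nat) (l : nat) (s : seq 'I_l) : bool := size s == k.

(* f maps B^+_{k,l} isomorphically onto a subgraph of (V, E): f is injective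
   on the tree's vertices, lands in V, and maps tree edges to edges of E.
   (The image of f together with the images of the tree edges is then a
   subgraph B of G isomorphic to B^+_{k,l}.) *)
Definition outtree_embedding (T : finType) (V : {set T}) (E : {set T * T})
  (k l : nat) (f : seq 'I_l -> T) : Prop :=
  [/\ {in @outtree_vertex k l, injective f},
      (forall s, @outtree_vertex k l s -> f s \in V)
    & (forall s (i : 'I_l), size s < k -> (f s, f (rcons s i)) \in E)].

(* Call a vertex branching of depth j (for a fixed m) if j = 0 and it satisfies
   P, or if it has m out-neighbours that are branching of depth j - 1. If no
   vertex of a graph of large minimum out-degree has m out-neighbours with a
   delta^+-common property Q, delete all vertices satisfying Q: every vertex
   loses fewer than m out-neighbours, so the rest still contains a Q-vertex,
   which satisfies Q in the whole graph by anti-monotonicity - a contradiction.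
   Hence branching of depth j is delta^+-common with constant d + j m. For
   m = 2 l^k, which exceeds the number of vertices of B^+_{k,l}, a root that is
   branching of depth k lets us embed the tree greedily from the top: each new
   vertex has m candidate images, fewer than m of which are already used, and
   the vertices at depth k satisfy P. *)

From mathcomp Require Import all_boot boolp.

Set Implicit Arguments. Unset Strict Implicit. Unset Printing Implicit Defensive.

Lemma exists_fresh (T : finType) (S : {set T}) (s : seq T) :
  size s < #|S| -> exists2 x, x \in S & x \notin s.
Proof.
move=> sS; apply/subsetPn/negP => /subset_leq_card Ss.
by have := leq_trans Ss (card_size s); rewrite leqNgt sS.
Qed.

Section InducedSubgraph.
Variables (T : finType) (V : {set T}) (E : {set T * T}).

Definition out_nbrs (x : T) : {set T} := [set y | (x, y) \in E].

Definition induced (W : {set T}) : {set T * T} :=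
  [set e in E | (e.1 \in W) && (e.2 \in W)].

Lemma digraph_induced (W : {set T}) :
  digraph V E -> W != set0 -> digraph W (induced W).
Proof.
case=> _ _ loopfree W0; split=> // [x y | x]; first by rewrite inE => /andP[].
by rewrite inE negb_and loopfree.
Qed.

Lemma subgraph_induced (W : {set T}) :
  W \subset V -> subgraph W (induced W) V E.
Proof. by split=> //; apply/subsetP => e; rewrite inE => /andP[]. Qed.

Lemma outdeg_induced_setD (X : {set T}) x : digraph V E -> x \in V :\: X ->
  outdeg E x <= outdeg (induced (V :\: X)) x + #|out_nbrs x :&: X|.
Proof.
case=> _ endsV _ xW; rewrite /outdeg -/(out_nbrs x).
suff /subset_leq_card : out_nbrs x \subset
    [set y | (x, y) \in induced (V :\: X)] :|: (out_nbrs x :&: X).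
  by rewrite cardsU => /leq_trans; apply; apply: leq_subr.
apply/subsetP => y; rewrite !inE => xy; move: xW; rewrite inE xy /= => ->.
by have /andP[_ ->] := endsV _ _ xy; case: (y \in X).
Qed.

Lemma min_outdeg_ge_setD (X : {set T}) d m :
  digraph V E -> min_outdeg_ge V E (d + m) ->
  {in V, forall x, #|out_nbrs x :&: X| <= m} ->
  min_outdeg_ge (V :\: X) (induced (V :\: X)) d.
Proof.
move=> G degG fewX x xW; have xV : x \in V by move: xW; rewrite inE => /andP[].
rewrite -(leq_add2r m); apply: leq_trans (degG x xV) _.
by apply: leq_trans (outdeg_induced_setD G xW) _; rewrite leq_add2l fewX.
Qed.

Lemma few_out_nbrs_setD_neq0 (X : {set T}) m :
  digraph V E -> min_outdeg_ge V E m ->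
  {in V, forall x, #|out_nbrs x :&: X| < m} -> V :\: X != set0.
Proof.
case=> V0 endsV _ degG fewX; have /set0Pn[v vV] := V0.
apply: contraTneq (fewX v vV) => /eqP; rewrite setD_eq0 -leqNgt => VX.
suff -> : out_nbrs v :&: X = out_nbrs v by exact: degG.
apply/setIidPl/subsetP => y; rewrite inE => vy.
by apply: (subsetP VX); have /andP[] := endsV _ _ vy.
Qed.

End InducedSubgraph.

Definition antimonotone (Q : vertex_property) : Prop :=
  forall (T : finType) (V : {set T}) (E : {set T * T}) (V' : {set T})
         (E' : {set T * T}) v,
    digraph V E -> digraph V' E' -> subgraph V' E' V E ->
    v \in V' -> Q T V' E' v -> Q T V E v.

Definition many_out_nbrs (Q : vertex_property) (m : nat) : vertex_property :=
  fun T V E v => exists S : {set T},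
    m <= #|S| /\ forall y, y \in S -> (v, y) \in E /\ Q T V E y.

Fixpoint branching (P : vertex_property) (m j : nat) : vertex_property :=
  if j is j'.+1 then many_out_nbrs (branching P m j') m else P.

Lemma antimonotone_many_out_nbrs Q m :
  antimonotone Q -> antimonotone (many_out_nbrs Q m).
Proof.
move=> antiQ T V E V' E' v G G' subG vV' [S [mS hS]].
exists S; split=> // y /hS[vy Qy]; split; first exact: (subsetP subG.2).
have [_ endsV' _] := G'; have /andP[_ yV'] := endsV' _ _ vy.
exact: antiQ G G' subG yV' Qy.
Qed.

Lemma exists_many_out_nbrs Q d m T (V : {set T}) E :
  delta_common Q d -> digraph V E -> min_outdeg_ge V E (d + m) ->
  exists2 v, v \in V & many_out_nbrs Q m V E v.
Proof.
move=> [existsQ antiQ] G degG; pose X := [set y in V | `[< Q T V E y >]].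
have [[v vV mX] | fewX] :=
  pselect (exists2 v, v \in V & m <= #|out_nbrs E v :&: X|).
  exists v => //; exists (out_nbrs E v :&: X); split=> // y.
  by rewrite !inE => /andP[-> /andP[_ /asboolP]].
have {}fewX : {in V, forall x, #|out_nbrs E x :&: X| < m}.
  by move=> x xV; rewrite ltnNge; apply: contra_notN fewX; exists x.
have deg_m : min_outdeg_ge V E m.
  by move=> x /degG; apply: leq_trans; rewrite leq_addl.
have GX := digraph_induced G (few_out_nbrs_setD_neq0 G deg_m fewX).
have degGX : min_outdeg_ge (V :\: X) (induced E (V :\: X)) d.
  by apply: min_outdeg_ge_setD G degG _ => x /fewX /ltnW.
have [w wW Qw] := existsQ _ _ _ GX degGX.
have /asboolP QwG :=
  antiQ _ _ _ _ _ _ G GX (subgraph_induced E (subsetDl V X)) wW Qw.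
by move: wW; rewrite !inE QwG andbT; case: (w \in V).
Qed.

Lemma delta_common_many_out_nbrs Q d m :
  delta_common Q d -> delta_common (many_out_nbrs Q m) (d + m).
Proof.
move=> commonQ; split=> [T V E | ]; first exact: exists_many_out_nbrs.
exact/antimonotone_many_out_nbrs/commonQ.2.
Qed.

Lemma delta_common_branching P d m j :
  delta_common P d -> delta_common (branching P m j) (d + j * m).
Proof.
move=> commonP; elim: j => [|j IHj]; first by rewrite addn0.
by rewrite mulSnr addnA; exact: delta_common_many_out_nbrs.
Qed.

Fixpoint words_of_size (l j : nat) : seq (seq 'I_l) :=
  if j is j'.+1 then [seq rcons s i | s <- words_of_size l j', i <- enum 'I_l]
  else [:: [::]].

Fixpoint words_upto (l j : nat) : seq (seq 'I_l) :=
  if j is j'.+1 then words_upto l j' ++ words_of_size l j else words_of_size l 0.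

Lemma mem_words_of_size l j s : (s \in words_of_size l j) = (size s == j).
Proof.
elim: j s => [|j IHj] s /=; first by rewrite inE size_eq0.
apply/allpairsP/idP => [[[p i] [/= pj _ ->]] | ].
  by rewrite size_rcons eqSS -IHj.
case/lastP: s => [|p i] //; rewrite size_rcons eqSS -IHj => pj.
by exists (p, i); rewrite mem_enum.
Qed.

Lemma uniq_words_of_size l j : uniq (words_of_size l j).
Proof.
elim: j => [|j IHj] //=; apply: allpairs_uniq => //; first exact: enum_uniq.
by move=> [p i] [q i'] _ _ /rcons_inj.
Qed.

Lemma size_words_of_size l j : size (words_of_size l j) = l ^ j.
Proof. by elim: j => [|j IHj] //=; rewrite size_allpairs size_enum_ord IHj expnSr. Qed.

Lemma words_uptoS l j :
  words_upto l j.+1 = words_upto l j ++ words_of_size l j.+1.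
Proof. by []. Qed.

Lemma mem_words_upto l j s : (s \in words_upto l j) = (size s <= j).
Proof.
elim: j => [|j IHj]; first by rewrite inE leqn0 size_eq0.
by rewrite words_uptoS mem_cat IHj mem_words_of_size (leq_eqVlt _ j.+1) ltnS orbC.
Qed.

Lemma uniq_words_upto l j : uniq (words_upto l j).
Proof.
elim: j => [|j IHj]; first exact: uniq_words_of_size.
rewrite words_uptoS cat_uniq IHj uniq_words_of_size andbT andTb.
by apply/hasPn => w; rewrite mem_words_of_size mem_words_upto => /eqP->; rewrite ltnn.
Qed.

Lemma size_words_upto_le l j k :
  j <= k -> size (words_upto l j) <= size (words_upto l k).
Proof.
move/subnK <-; elim: (k - j) => // n IHn.
by rewrite addSn words_uptoS size_cat; apply: leq_trans IHn (leq_addr _ _).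
Qed.

Lemma size_words_upto_lt l j : 2 <= l -> size (words_upto l j) < 2 * l ^ j.
Proof.
move=> l2; elim: j => [|j IHj] //.
rewrite words_uptoS size_cat size_words_of_size mul2n -addnn ltn_add2r expnS.
by apply: leq_trans IHj _; rewrite leq_mul2r l2 orbT.
Qed.

Section GreedyEmbedding.
Variables (P : vertex_property) (T : finType) (V : {set T}) (E : {set T * T}).
Variables (l m k : nat).
Hypothesis G : digraph V E.
Arguments P : clear implicits.

(* The image of a word w keeps the branching property of depth k - |w|, so
   each child still to be placed has m candidate images. *)
Definition partial_embedding (f : seq 'I_l -> T) (ws : seq (seq 'I_l)) : Prop :=
  [/\ {in ws &, injective f},
      forall w, w \in ws -> f w \in V /\ branching P m (k - size w) V E (f w)
    & forall p i, rcons p i \in ws -> p \in ws /\ (f p, f (rcons p i)) \in E].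

Lemma partial_embedding_rcons f ws p i :
  partial_embedding f ws -> p \in ws -> size p < k -> rcons p i \notin ws ->
  size ws < m -> exists f', partial_embedding f' (rcons ws (rcons p i)).
Proof.
move=> [inj_f fV fE] pws pk wnew wsm; set w := rcons p i in wnew *.
have [_] := fV p pws; rewrite -(subnSK pk) -(size_rcons p i) -/w => -[S [mS hS]].
have [x xS xfresh] : exists2 x, x \in S & x \notin map f ws.
  by apply: exists_fresh; rewrite size_map (leq_trans wsm mS).
have [fpx branch_x] := hS x xS.
pose f' s := if s == w then x else f s.
have f'w : f' w = x by rewrite /f' eqxx.
have f'E : {in ws, f' =1 f}.
  by move=> s sws; rewrite /f' ifN //; apply: contraNneq wnew => <-.
exists f'; split.
- move=> s t; rewrite !mem_rcons !inE.
  case/predU1P=> [-> | sws]; case/predU1P=> [-> | tws] //; rewrite ?f'w ?f'E //.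
  + by move=> xft; rewrite xft map_f in xfresh.
  + by move=> fsx; rewrite -fsx map_f in xfresh.
  + exact: inj_f.
- move=> u; rewrite mem_rcons inE => /predU1P[-> | uws].
    by rewrite f'w; split=> //; have [_ endsV _] := G; have /andP[] := endsV _ _ fpx.
  by rewrite f'E //; exact: fV.
- move=> q j; rewrite !mem_rcons !inE => /predU1P[/rcons_inj[-> ->] | qjws].
    by rewrite pws orbT f'E // -/w f'w.
  have [qws e] := fE q j qjws.
  by rewrite qws orbT !f'E.
Qed.

Lemma partial_embedding_cat f ws new :
  partial_embedding f ws ->
  (forall w, w \in new -> exists p i, [/\ w = rcons p i, p \in ws & size p < k]) ->
  uniq (ws ++ new) -> size (ws ++ new) <= m ->
  exists f', partial_embedding f' (ws ++ new).
Proof.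
elim: new f ws => [|w new IHnew] f ws emb parents; first by rewrite cats0; exists f.
rewrite -cat_rcons => uniq_ws size_ws.
have [p [i [w_def pws pk]]] := parents w (mem_head w new).
have wnew : w \notin ws.
  by move: uniq_ws; rewrite cat_uniq rcons_uniq => /andP[/andP[]].
have [f' emb'] : exists f', partial_embedding f' (rcons ws w).
  rewrite w_def; apply: partial_embedding_rcons emb pws pk _ _; first by rewrite -w_def.
  by apply: leq_trans size_ws; rewrite size_cat size_rcons ltnS leq_addr.
apply: IHnew _ _ emb' _ uniq_ws size_ws => u unew.
have /parents[q [j [-> qws qk]]] : u \in w :: new by rewrite inE unew orbT.
by exists q, j; rewrite mem_rcons inE qws orbT.
Qed.

Lemma partial_embedding_words_upto v j :
  v \in V -> branching P m k V E v -> size (words_upto l k) <= m -> j <= k ->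
  exists f, partial_embedding f (words_upto l j).
Proof.
move=> vV branch_v tree_m; elim: j => [_ | j IHj jk].
  exists (fun=> v); split=> [s t | w | p i]; rewrite !inE.
  - by move=> /eqP-> /eqP->.
  - by move/eqP->; rewrite subn0.
  - by case: p.
have [f emb] := IHj (ltnW jk).
rewrite words_uptoS; apply: partial_embedding_cat emb _ _ _.
- move=> w; rewrite mem_words_of_size; case/lastP: w => [|p i] //.
  rewrite size_rcons eqSS => /eqP pj.
  by exists p, i; rewrite mem_words_upto pj.
- by rewrite -words_uptoS uniq_words_upto.
- by rewrite -words_uptoS (leq_trans (size_words_upto_le l jk) tree_m).
Qed.

(* [{in A, injective g}] also compares g on A with g outside A, so the words
   longer than k are all sent to a vertex z outside the image of the tree. *)
Lemma outtree_embedding_extend f z :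
  partial_embedding f (words_upto l k) -> z \notin map f (words_upto l k) ->
  let g s := if size s <= k then f s else z in
  @outtree_embedding T V E k l g /\ (forall s, @outtree_leaf k l s -> P T V E (g s)).
Proof.
move=> [inj_f fV fE] zfresh g.
have tree_words s : size s <= k -> s \in words_upto l k by rewrite mem_words_upto.
split; first split.
- move=> s; rewrite unfold_in => ss t; rewrite /g ss; case: ifP => tk.
    by apply: inj_f; rewrite tree_words.
  by move=> fsz; rewrite -fsz map_f ?tree_words in zfresh.
- move=> s; rewrite /outtree_vertex => ss; rewrite /g ss.
  by have [] := fV s (tree_words s ss).
- move=> s i sk; rewrite /g (ltnW sk) size_rcons sk.
  by have /fE[] : rcons s i \in words_upto l k by rewrite mem_words_upto size_rcons.
move=> s /eqP sk; rewrite /g sk leqnn.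
have /fV[_] : s \in words_upto l k by rewrite mem_words_upto sk.
by rewrite sk subnn.
Qed.

End GreedyEmbedding.

Theorem theorem3p5 (P : vertex_property) (d k l : nat)
  (hP : delta_common P d) (hk : 1 <= k) (hl : 2 <= l)
  (T : finType) (V : {set T}) (E : {set T * T})
  (hG : digraph V E) (hdeg : min_outdeg_ge V E (d + 2 * k * l ^ k)) :
  exists f : seq 'I_l -> T,
    @outtree_embedding T V E k l f /\
    (forall s, @outtree_leaf k l s -> P T V E (f s)).
Proof.
pose m := 2 * l ^ k.
have degG : min_outdeg_ge V E (d + k * m) by rewrite /m mulnCA mulnA.
have [r rV branch_r] := (delta_common_branching m k hP).1 T V E hG degG.
have tree_m : size (words_upto l k) < m := size_words_upto_lt k hl.
have [f emb] := partial_embedding_words_upto hG rV branch_r (ltnW tree_m) (leqnn k).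
have m_T : m <= #|T|.
  apply: leq_trans (max_card (out_nbrs E r)); apply: leq_trans (degG r rV).
  exact: leq_trans (leq_pmull m hk) (leq_addl d _).
have [z _ zfresh] : exists2 z, z \in [set: T] & z \notin map f (words_upto l k).
  by apply: exists_fresh; rewrite size_map cardsT (leq_trans tree_m m_T).
by eexists; exact: outtree_embedding_extend emb zfresh.
Qed.
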